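(* For all integers $k\ge2$ and $n\ge2$ and all valuations $v$, we have $b^e(v,P^{n+k-1,1})>b^e(v,P^{n,k})$.
   Context: Let $F$ be a continuous, atomless cumulative distribution function of valuations on the nonnegative reals. For an integer $m\ge2$ define $b^e(v,m)=v-F(v)^{-(m-1)}\int_0^vF(u)^{m-1}du$. For a probability distribution $P=(p_j)_{j\ge0}$ on the number of agents define $b^e(v,P)=\sum_{j\ge2}p_jb^e(v,j)$. Write $P_{x\ge i}=\sum_{x\ge i}p_x$. Write $P<P'$ iff there exists $l$ such that $P_{x\ge i}=P'_{x\ge i}$ for all $i<l$ and $P_{x\ge i}<P'_{x\ge i}$ for all $i\ge l$. Standing assumption: whenever $P<P'$, we have $b^e(v,P)<b^e(v,P')$ for all $v$. Let $\gamma_A$ be a probability distribution on $\{1,\dots,\kappa\}$, for a fixed integer $\kappa\ge2$, with $\gamma_A(1)<1$. For $n\ge2$ and $k\ge1$, $P^{n,k}$ denotes the distribution of $k+X_1+\dots+X_{n-1}$, where the $X_j$ are i.i.d. with distribution $\gamma_A$. *)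

From Stdlib Require Import Reals Lra Lia.
From Coquelicot Require Import Coquelicot.
Open Scope R_scope.

Definition is_valuation_cdf (F : R -> R) : Prop :=
  (forall x, continuous F x) /\
  (forall x y, x <= y -> F x <= F y) /\
  (forall x, x <= 0 -> F x = 0) /\
  is_lim F p_infty 1.

Definition be (F : R -> R) (v : R) (m : nat) : R :=
  v - / (F v ^ (m - 1)) * RInt (fun u => F u ^ (m - 1)) 0 v.

Definition is_dist (P : nat -> R) : Prop :=
  (forall j, 0 <= P j) /\ is_series P 1.

Definition be_dist (F : R -> R) (v : R) (P : nat -> R) : R :=
  Series (fun j => if (2 <=? j)%nat then P j * be F v j else 0).

Definition tail (P : nat -> R) (i : nat) : R := Series (fun x => P (i + x)%nat).

Definition dist_lt (P P' : nat -> R) : Prop :=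
  exists l : nat,
    (forall i, (i < l)%nat -> tail P i = tail P' i) /\
    (forall i, (l <= i)%nat -> tail P i < tail P' i).

(* Standing assumption (for valuations v at which b^e is defined, i.e. F v > 0). *)
Definition standing_assumption (F : R -> R) : Prop :=
  forall P P', is_dist P -> is_dist P' -> dist_lt P P' ->
    forall v, 0 < F v -> be_dist F v P < be_dist F v P'.

Definition is_gammaA (kappa : nat) (g : nat -> R) : Prop :=
  (forall j, 0 <= g j) /\
  (forall j, (j < 1)%nat \/ (kappa < j)%nat -> g j = 0) /\
  sum_f 1 kappa g = 1 /\
  g 1%nat < 1.

Fixpoint conv_pow (g : nat -> R) (m : nat) (x : nat) : R :=
  match m with
  | O => if (x =? 0)%nat then 1 else 0
  | S m' => sum_f_R0 (fun y => conv_pow g m' y * g (x - y)%nat) x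
  end.

(* P^{n,k} : law of k + X_1 + ... + X_{n-1} *)
Definition Pnk (g : nat -> R) (n k : nat) : nat -> R :=
  fun x => if (k <=? x)%nat then conv_pow g (n - 1) (x - k) else 0.

From Stdlib Require Import Reals Lra Lia.
From Coquelicot Require Import Coquelicot.
Open Scope R_scope.

(* The expected bid h(m) := b^e(v,m) vanishes for m <= 1 and is strictly
   increasing for m >= 1: after dividing by F(v)^m, the step from m to m+1
   compares the integrals of (F/F(v))^m and (F/F(v))^(m-1) over [0,v], and
   F < F(v) on a subinterval of positive length.  Both sides of the claim are
   expectations E h(a + S_m) with S_m a sum of m i.i.d. gamma_A-variables:
   (a, m) = (1, n+k-2) on the left and (k, n-1) on the right.  Trading one
   unit of the deterministic shift a for one more summand X >= 1, which
   exceeds 1 with positive probability, strictly increases the expectation;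
   k-1 such trades turn the right-hand side into the left-hand side. *)

Lemma continuous_pow_fun (f : R -> R) (p : nat) (x : R) :
  (forall y, continuous f y) -> continuous (fun u => f u ^ p) x.
Proof.
  intros Cf; induction p as [|p IH].
  - apply continuous_ext with (f := fun _ => 1); [reflexivity|apply continuous_const].
  - apply continuous_ext with (f := fun u => mult (f u) (f u ^ p)); [reflexivity|].
    apply (@continuous_mult R_UniformSpace R_AbsRing); auto.
Qed.

Lemma RInt_lt_subinterval (f g : R -> R) (a c d b : R) :
  a <= c -> c < d -> d <= b ->
  (forall x, continuous f x) -> (forall x, continuous g x) ->
  (forall x, a <= x <= b -> f x <= g x) ->
  (forall x, c < x < d -> f x < g x) ->
  RInt f a b < RInt g a b.
Proof.
  intros Hac Hcd Hdb Cf Cg Hle Hlt.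
  assert (Ef : forall x y, ex_RInt f x y)
    by (intros; apply (@ex_RInt_continuous R_CompleteNormedModule); auto).
  assert (Eg : forall x y, ex_RInt g x y)
    by (intros; apply (@ex_RInt_continuous R_CompleteNormedModule); auto).
  rewrite <- (RInt_Chasles f a c b), <- (RInt_Chasles f c d b) by auto.
  rewrite <- (RInt_Chasles g a c b), <- (RInt_Chasles g c d b) by auto.
  unfold plus; simpl.
  assert (RInt f a c <= RInt g a c) by (apply RInt_le; auto; intros; apply Hle; lra).
  assert (RInt f d b <= RInt g d b) by (apply RInt_le; auto; intros; apply Hle; lra).
  assert (RInt f c d < RInt g c d) by (apply RInt_lt; auto).
  lra.
Qed.

Lemma be_le_1 (F : R -> R) (v : R) (m : nat) : (m <= 1)%nat -> be F v m = 0.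
Proof.
  intros Hm; unfold be.
  replace (m - 1)%nat with 0%nat by lia; simpl.
  rewrite RInt_const; unfold scal; simpl; unfold mult; simpl.
  rewrite Rinv_1; ring.
Qed.

Section ExpectedBid.

Variable F : R -> R.
Hypothesis HF : is_valuation_cdf F.
Variable v : R.
Hypothesis Hv : 0 < F v.

Lemma cdf_nonneg x : 0 <= F x.
Proof.
  destruct HF as (_ & Hmono & Hzero & _).
  destruct (Rle_dec x 0) as [Hx|Hx]; [rewrite Hzero by exact Hx; lra|].
  rewrite <- (Hzero 0) by lra; apply Hmono; lra.
Qed.

Lemma cdf_window :
  exists c d, 0 <= c /\ c < d /\ d <= v /\ forall x, c < x < d -> 0 < F x < F v.
Proof.
  destruct HF as (Hcont & Hmono & Hzero & _).
  assert (Hv0 : 0 < v).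
  { destruct (Rle_dec v 0) as [H|H]; [rewrite Hzero in Hv by exact H; lra|lra]. }
  assert (Ccont : continuity F) by (intro x; apply continuity_pt_filterlim, Hcont).
  assert (F0 : F 0 = 0) by (apply Hzero; lra).
  destruct (IVT_gen F 0 v (F v / 3) Ccont) as [c [Hc Fc]].
  { rewrite F0, Rmin_left, Rmax_right; lra. }
  destruct (IVT_gen F 0 v (2 * F v / 3) Ccont) as [d [Hd Fd]].
  { rewrite F0, Rmin_left, Rmax_right; lra. }
  rewrite Rmin_left, Rmax_right in Hc, Hd by lra.
  assert (Hcd : c < d).
  { destruct (Rlt_dec c d) as [H|H]; [exact H|].
    assert (F d <= F c) by (apply Hmono; lra); lra. }
  exists c, d; do 3 (split; [lra|]); intros x Hx; split.
  - assert (F c <= F x) by (apply Hmono; lra); lra.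
  - assert (F x <= F d) by (apply Hmono; lra); lra.
Qed.

Lemma RInt_cdf_pow_succ_lt p :
  RInt (fun u => F u ^ S p) 0 v < F v * RInt (fun u => F u ^ p) 0 v.
Proof.
  destruct HF as (Hcont & Hmono & _).
  destruct cdf_window as (c & d & Hc & Hcd & Hd & Hwin).
  assert (Hscal : RInt (fun u => F v * F u ^ p) 0 v = F v * RInt (fun u => F u ^ p) 0 v).
  { apply (RInt_scal (fun u => F u ^ p)).
    apply (@ex_RInt_continuous R_CompleteNormedModule).
    intros; apply continuous_pow_fun; auto. }
  rewrite <- Hscal.
  apply RInt_lt_subinterval with c d; try lra.
  - intros; apply continuous_pow_fun; auto.
  - intros; apply (@continuous_mult R_UniformSpace R_AbsRing);
      [apply continuous_const|apply continuous_pow_fun; auto].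
  - intros x Hx; simpl.
    apply Rmult_le_compat_r; [apply pow_le, cdf_nonneg|apply Hmono; lra].
  - intros x Hx; simpl.
    destruct (Hwin x Hx).
    apply Rmult_lt_compat_r; [apply pow_lt|]; lra.
Qed.

Lemma be_succ_lt p : be F v (S p) < be F v (S (S p)).
Proof.
  unfold be.
  replace (S p - 1)%nat with p by lia.
  replace (S (S p) - 1)%nat with (S p) by lia.
  assert (Hp : 0 < F v ^ p) by (apply pow_lt; lra).
  assert (Hdiv : forall A B : R, A < F v * B -> / F v ^ S p * A < / F v ^ p * B).
  { intros A B HAB.
    replace (/ F v ^ S p * A) with (/ F v ^ p * (A / F v)) by (simpl; field; lra).
    apply Rmult_lt_compat_l; [apply Rinv_0_lt_compat; lra|].
    apply Rmult_lt_reg_l with (F v); [lra|].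
    replace (F v * (A / F v)) with A by (field; lra); lra. }
  pose proof (Hdiv _ _ (RInt_cdf_pow_succ_lt p)); lra.
Qed.

End ExpectedBid.

Lemma sum_f_R0_vanishing_tail (f : nat -> R) (M N : nat) :
  (forall x, (M < x)%nat -> f x = 0) -> (M <= N)%nat ->
  sum_f_R0 f N = sum_f_R0 f M.
Proof.
  intros Hf HMN; replace N with (M + (N - M))%nat by lia.
  induction (N - M)%nat as [|d IH].
  - now rewrite Nat.add_0_r.
  - rewrite Nat.add_succ_r, tech5, IH, Hf by lia; ring.
Qed.

Lemma sum_f_R0_antidiagonal (A : nat -> nat -> R) (N : nat) :
  sum_f_R0 (fun x => sum_f_R0 (fun y => A y (x - y)%nat) x) N =
  sum_f_R0 (fun y => sum_f_R0 (A y) (N - y)) N.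
Proof.
  induction N as [|N IH]; [reflexivity|].
  rewrite tech5, IH, !tech5, Nat.sub_diag; simpl (sum_f_R0 _ 0).
  rewrite (sum_eq (fun y => sum_f_R0 (A y) (S N - y))
                  (fun y => sum_f_R0 (A y) (N - y) + A y (S N - y)%nat)).
  - rewrite sum_plus; ring.
  - intros i Hi; replace (S N - i)%nat with (S (N - i)) by lia; apply tech5.
Qed.

Lemma sum_f_R0_shift (f : nat -> R) (a K : nat) :
  (forall j, (j < a)%nat -> f j = 0) ->
  sum_f_R0 f (a + K) = sum_f_R0 (fun x => f (a + x)%nat) K.
Proof.
  revert f; induction a as [|a IH]; intros f Hf; [reflexivity|].
  rewrite decomp_sum, Hf, Rplus_0_l by lia.
  replace (Init.Nat.pred (S a + K)) with (a + K)%nat by lia.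
  apply (IH (fun i => f (S i))); intros; apply Hf; lia.
Qed.

Lemma sum_f_R0_weighted_pos (w d : nat -> R) (N : nat) :
  (forall x, 0 <= w x) -> (forall x, 0 < d x) ->
  0 < sum_f_R0 w N -> 0 < sum_f_R0 (fun x => w x * d x) N.
Proof.
  intros Hw Hd; induction N as [|N IH]; simpl; intros Hsum.
  - apply Rmult_lt_0_compat; auto.
  - assert (0 <= w (S N) * d (S N)) by (apply Rmult_le_pos, Rlt_le; auto).
    destruct (Rlt_dec 0 (sum_f_R0 w N)) as [Hpos|Hzero].
    + assert (0 < sum_f_R0 (fun x => w x * d x) N) by (apply IH; auto); lra.
    + assert (0 <= sum_f_R0 (fun x => w x * d x) N)
        by (apply cond_pos_sum; intros; apply Rmult_le_pos, Rlt_le; auto).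
      assert (0 < w (S N) * d (S N)) by (apply Rmult_lt_0_compat; [lra|auto]).
      lra.
Qed.

Lemma Series_finite_support (T : nat -> R) (K : nat) :
  (forall j, (K < j)%nat -> T j = 0) -> Series T = sum_f_R0 T K.
Proof.
  intros HT; apply is_series_unique, is_series_Reals.
  intros eps Heps; exists K; intros n Hn.
  rewrite (sum_f_R0_vanishing_tail T K n), R_dist_eq by auto; lra.
Qed.

Section Convolution.

Variable kappa : nat.
Variable g : nat -> R.
Hypothesis Hg : is_gammaA kappa g.

Lemma gammaA_kappa_ge_2 : (2 <= kappa)%nat.
Proof.
  destruct Hg as (_ & _ & Hs & Hg1); unfold sum_f in Hs.
  destruct (Nat.le_gt_cases 2 kappa) as [H|H]; [exact H|].
  replace (kappa - 1)%nat with 0%nat in Hs by lia; simpl in Hs; lra.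
Qed.

Lemma gammaA_nonneg j : 0 <= g j.
Proof. destruct Hg as (H & _); auto. Qed.

Lemma gammaA_out j : (kappa < j)%nat -> g j = 0.
Proof. destruct Hg as (_ & H & _); auto. Qed.

Lemma gammaA_0 : g 0%nat = 0.
Proof. destruct Hg as (_ & H & _); apply H; lia. Qed.

Lemma gammaA_mass : sum_f_R0 g kappa = 1.
Proof.
  destruct Hg as (_ & _ & Hs & _); unfold sum_f in Hs.
  pose proof gammaA_kappa_ge_2.
  rewrite decomp_sum, gammaA_0, Rplus_0_l, <- Hs by lia.
  replace (Init.Nat.pred kappa) with (kappa - 1)%nat by lia.
  apply sum_eq; intros; f_equal; lia.
Qed.

Lemma conv_pow_nonneg m x : 0 <= conv_pow g m x.
Proof.
  revert x; induction m as [|m IH]; intros x; simpl.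
  - destruct (x =? 0)%nat; lra.
  - apply cond_pos_sum; intros; apply Rmult_le_pos; auto; apply gammaA_nonneg.
Qed.

Lemma conv_pow_out m x : (m * kappa < x)%nat -> conv_pow g m x = 0.
Proof.
  revert x; induction m as [|m IH]; intros x Hx; simpl.
  - destruct x; simpl in *; [lia|reflexivity].
  - apply sum_eq_R0; intros y Hy.
    destruct (Nat.lt_ge_cases (m * kappa) y).
    + rewrite IH by auto; ring.
    + rewrite gammaA_out by (simpl in Hx; lia); ring.
Qed.

Lemma sum_conv_pow_succ m (f : nat -> R) :
  sum_f_R0 (fun x => conv_pow g (S m) x * f x) (S m * kappa) =
  sum_f_R0 (fun y => conv_pow g m y * sum_f_R0 (fun j => g j * f (y + j)%nat) kappa)
    (m * kappa).
Proof.
  set (A := fun y j => conv_pow g m y * g j * f (y + j)%nat).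
  rewrite (sum_eq _ (fun x => sum_f_R0 (fun y => A y (x - y)%nat) x)).
  2:{ intros x Hx; simpl; rewrite Rmult_comm, scal_sum; apply sum_eq.
      intros y Hy; unfold A; replace (y + (x - y))%nat with x by lia; ring. }
  rewrite sum_f_R0_antidiagonal.
  rewrite (sum_f_R0_vanishing_tail _ (m * kappa)).
  2:{ intros y Hy; apply sum_eq_R0; intros; unfold A.
      rewrite conv_pow_out by exact Hy; ring. }
  2:{ simpl; lia. }
  apply sum_eq; intros y Hy.
  rewrite (sum_f_R0_vanishing_tail _ kappa).
  2:{ intros j Hj; unfold A; rewrite gammaA_out by exact Hj; ring. }
  2:{ simpl; lia. }
  rewrite scal_sum; apply sum_eq; intros; unfold A; ring.
Qed.

Lemma conv_pow_mass m : sum_f_R0 (conv_pow g m) (m * kappa) = 1.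
Proof.
  induction m as [|m IH]; [reflexivity|].
  rewrite (sum_eq _ (fun x => conv_pow g (S m) x * 1)) by (intros; ring).
  rewrite sum_conv_pow_succ; transitivity (sum_f_R0 (conv_pow g m) (m * kappa)); [|exact IH].
  apply sum_eq; intros.
  rewrite (sum_eq _ g), gammaA_mass by (intros; ring); ring.
Qed.

Section Expectation.

Variable h : nat -> R.
Hypothesis h_succ_lt : forall p, h (S p) < h (S (S p)).

Lemma h_le p q : (1 <= p <= q)%nat -> h p <= h q.
Proof.
  intros Hpq; replace q with (p + (q - p))%nat by lia.
  induction (q - p)%nat as [|d IH].
  - rewrite Nat.add_0_r; lra.
  - rewrite Nat.add_succ_r; destruct (p + d)%nat as [|r] eqn:E; [lia|].
    pose proof (h_succ_lt r); lra.
Qed.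

(* X >= 1 always and X >= 2 with probability 1 - g 1 > 0. *)
Lemma h_succ_lt_mean b : h (S b) < sum_f_R0 (fun j => g j * h (b + j)%nat) kappa.
Proof.
  pose proof gammaA_kappa_ge_2.
  pose proof gammaA_mass as Hs.
  rewrite !decomp_sum in Hs |- * by lia.
  rewrite gammaA_0 in *.
  replace (b + 1)%nat with (S b) by lia.
  set (K := Init.Nat.pred (Init.Nat.pred kappa)) in *.
  assert (Htail : sum_f_R0 (fun i => g (S (S i)) * h (S (S b))) K
                  <= sum_f_R0 (fun i => g (S (S i)) * h (b + S (S i))%nat) K).
  { apply sum_Rle; intros; apply Rmult_le_compat_l; [apply gammaA_nonneg|apply h_le; lia]. }
  rewrite <- scal_sum in Htail.
  set (G := sum_f_R0 (fun i => g (S (S i))) K) in *.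
  pose proof (h_succ_lt b).
  destruct Hg as (_ & _ & _ & Hg1).
  simpl in Hs |- *; nra.
Qed.

Definition shifted_mean (m a : nat) : R :=
  sum_f_R0 (fun x => conv_pow g m x * h (a + x)%nat) (m * kappa).

Lemma shifted_mean_trade1 m a : shifted_mean m (S a) < shifted_mean (S m) a.
Proof.
  unfold shifted_mean; rewrite sum_conv_pow_succ.
  apply Rlt_0_minus; rewrite <- minus_sum.
  rewrite (sum_eq _ (fun y => conv_pow g m y *
             (sum_f_R0 (fun j => g j * h (a + y + j)%nat) kappa - h (S (a + y))))).
  2:{ intros y _; simpl (S a + y)%nat.
      rewrite (sum_eq _ (fun j => g j * h (a + y + j)%nat))
        by (intros; rewrite Nat.add_assoc; reflexivity).
      ring. }
  apply sum_f_R0_weighted_pos.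
  - intros; apply conv_pow_nonneg.
  - intros y; pose proof (h_succ_lt_mean (a + y)); lra.
  - rewrite conv_pow_mass; lra.
Qed.

Lemma shifted_mean_trade d m a :
  shifted_mean m (a + S d) < shifted_mean (m + S d) a.
Proof.
  revert a; induction d as [|d IH]; intros a.
  - rewrite !Nat.add_1_r; apply shifted_mean_trade1.
  - replace (a + S (S d))%nat with (S a + S d)%nat by lia.
    replace (m + S (S d))%nat with (S (m + S d)) by lia.
    eapply Rlt_trans; [apply IH|apply shifted_mean_trade1].
Qed.

End Expectation.

Lemma be_dist_Pnk F v M a :
  be_dist F v (Pnk g M a) = shifted_mean (be F v) (M - 1) a.
Proof.
  unfold be_dist, shifted_mean, Pnk.
  rewrite (Series_finite_support _ (a + (M - 1) * kappa)).
  - rewrite sum_f_R0_shift.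
    + apply sum_eq; intros x _.
      replace (a <=? a + x)%nat with true by (symmetry; apply Nat.leb_le; lia).
      replace (a + x - a)%nat with x by lia.
      destruct (2 <=? a + x)%nat eqn:E2; [reflexivity|].
      apply Nat.leb_gt in E2; rewrite be_le_1 by lia; ring.
    + intros j Hj; replace (a <=? j)%nat with false by (symmetry; apply Nat.leb_gt; lia).
      destruct (2 <=? j)%nat; ring.
  - intros j Hj; destruct (2 <=? j)%nat; [|reflexivity].
    destruct (a <=? j)%nat eqn:Ea; [|ring].
    apply Nat.leb_le in Ea; rewrite conv_pow_out by lia; ring.
Qed.

End Convolution.

Theorem lemma2 (F : R -> R) (kappa : nat) (g : nat -> R) :
  is_valuation_cdf F ->
  standing_assumption F ->
  (2 <= kappa)%nat ->
  is_gammaA kappa g ->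
  forall (k n : nat), (2 <= k)%nat -> (2 <= n)%nat ->
  forall v : R, 0 < F v ->
    be_dist F v (Pnk g (n + k - 1) 1) > be_dist F v (Pnk g n k).
Proof.
  intros HF _ _ Hg k n Hk Hn v Hv.
  rewrite !(be_dist_Pnk kappa g Hg).
  pose proof (shifted_mean_trade kappa g Hg (be F v) (be_succ_lt F HF v Hv)
                (k - 2) (n - 1) 1) as Htrade.
  replace (1 + S (k - 2))%nat with k in Htrade by lia.
  replace (n - 1 + S (k - 2))%nat with (n + k - 1 - 1)%nat in Htrade by lia.
  exact Htrade.
Qed.
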